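(* Suppose $\alpha=r\beta+s$ with $r,s\in\mathbb{Q}^d$ and $\beta\in\mathbb{R}$, and let $\mathcal{D}=[0,1)^d$. Then \[\sup_{T_1,\ldots,T_d\geq 1} G(\alpha,\mathcal{D}_T)<\infty .\]
   Context: For a bounded set $\mathcal{D}\subset\mathbb{R}^d$ and $\alpha\in\mathbb{R}^d$, let $S(\alpha,\mathcal{D})=\{m\cdot\alpha \bmod 1 \mid m\in\mathbb{Z}^d\cap\mathcal{D}\}\subset\mathbb{R}/\mathbb{Z}$, and let $G(\alpha,\mathcal{D})$ be the number of distinct lengths of the gaps between consecutive elements of $S(\alpha,\mathcal{D})$ on the circle $\mathbb{R}/\mathbb{Z}$. For $T=\operatorname{diag}(T_1,\ldots,T_d)$ with $T_i>0$, $\mathcal{D}_T=\{xT\mid x\in\mathcal{D}\}$, so here $\mathcal{D}_T=[0,T_1)\times\cdots\times[0,T_d)$. *)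

From HB Require Import structures.
From mathcomp Require Import all_boot all_order all_algebra.
From mathcomp Require Import finmap.
From mathcomp Require Import boolp classical_sets functions cardinality reals.
Set Implicit Arguments. Unset Strict Implicit. Unset Printing Implicit Defensive.
Import Order.TTheory GRing.Theory Num.Theory.
Local Open Scope classical_set_scope.
Local Open Scope ring_scope.

Section Defs.
Variables (R : realType) (d : nat).

Definition frac (x : R) : R := x - (Num.floor x)%:~R.

Definition dotZ (m : 'I_d -> int) (alpha : 'I_d -> R) : R :=
  \sum_(i < d) (m i)%:~R * alpha i.

Definition unit_box : set ('I_d -> R) := [set x | forall i, 0 <= x i < 1].

Definition scaleD (D : set ('I_d -> R)) (T : 'I_d -> R) : set ('I_d -> R) :=
  [set (fun i => x i * T i) | x in D].

Definition Sset (alpha : 'I_d -> R) (D : set ('I_d -> R)) : set R :=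
  [set frac (dotZ m alpha) | m in [set m : 'I_d -> int | D (fun i => (m i)%:~R)]].

End Defs.

(* counterclockwise distance on R/Z from x to y, taking values in (0,1]
   (a point is at distance 1, a full turn, from itself) *)
Definition fwd_dist (R : realType) (x y : R) : R :=
  if frac (y - x) == 0 then 1 else frac (y - x).

Definition gap_at (R : realType) (S : set R) (x g : R) : Prop :=
  (exists2 y, S y & g = fwd_dist x y) /\ (forall y, S y -> g <= fwd_dist x y).

Definition gap_lengths (R : realType) (S : set R) : set R :=
  [set g | exists2 x, S x & gap_at S x g].

Definition Gnum (R : realType) (d : nat) (alpha : 'I_d -> R) (D : set ('I_d -> R)) : nat :=
  #|` fset_set (gap_lengths (Sset alpha D)) |.

From Pilot Require Import Defs.
From HB Require Import structures.
From mathcomp Require Import all_boot all_order all_algebra.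
From mathcomp Require Import finmap.
From mathcomp Require Import boolp classical_sets functions cardinality reals.
From mathcomp Require Import lra zify ring.

(* Clearing denominators gives Q_i alpha_i = e_i theta + z_i with Q_i > 0,
   e_i in {-1, 0, 1}, z_i integral and theta = M beta.  Writing each
   coordinate as m_i = Q_i u_i + v_i with 0 <= v_i < Q_i, the number m.alpha
   is congruent mod 1 to sum_i v_i alpha_i + (sum_i e_i u_i) theta, and for a
   fixed residue vector v the signed sum sum_i e_i u_i runs through an
   interval of integers.  So S(alpha, D_T) is a union of at most prod_i Q_i
   arithmetic progressions of common difference theta, whatever T is.
   For such a union of K progressions, shifting a gap by -theta preserves its
   length unless the gap starts or ends at a first term, or the shifted gap
   passes over a last term; each of these three situations occurs for at most
   one gap length per progression, so there are at most 3K gap lengths. *)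

Set Implicit Arguments. Unset Strict Implicit.
Import Order.TTheory GRing.Theory Num.Theory.
Local Open Scope ring_scope.
Local Open Scope classical_set_scope.
Local Notation frac := Defs.frac.

Section CircleDistance.
Variable R : realType.
Implicit Types a b c e t x y w : R.

Definition eqmod1 a b := exists m : int, a - b = m%:~R.

Lemma eqmod1_refl a : eqmod1 a a.
Proof. by exists 0; rewrite subrr. Qed.

Lemma eqmod1_sym a b : eqmod1 a b -> eqmod1 b a.
Proof. by case=> m h; exists (- m); rewrite intrN -h opprB. Qed.

Lemma eqmod1_trans b a c : eqmod1 a b -> eqmod1 b c -> eqmod1 a c.
Proof. by case=> m h [k h']; exists (m + k); rewrite intrD -h -h' addrA subrK. Qed.

Lemma eqmod1D a b c e : eqmod1 a b -> eqmod1 c e -> eqmod1 (a + c) (b + e).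
Proof. by case=> m h [k h']; exists (m + k); rewrite intrD -h -h'; ring. Qed.

Lemma eqmod1B a b c e : eqmod1 a b -> eqmod1 c e -> eqmod1 (a - c) (b - e).
Proof. by case=> m h [k h']; exists (m - k); rewrite intrB -h -h'; ring. Qed.

Lemma eqmod1_frac x : eqmod1 (frac x) x.
Proof. by exists (- Num.floor x); rewrite /frac intrN addrAC subrr add0r. Qed.

Lemma frac_ge0 x : 0 <= frac x.
Proof. by rewrite /frac subr_ge0 floor_le. Qed.

Lemma frac_lt1 x : frac x < 1.
Proof. by rewrite /frac ltrBlDr addrC -[_ + 1]/(_ + 1%:~R) -intrD floorD1_gt. Qed.

Lemma frac_id x : 0 <= x < 1 -> frac x = x.
Proof.
move=> x01; rewrite /frac (_ : Num.floor x = 0) ?subr0 //.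
by apply: floor_def; rewrite add0r.
Qed.

Lemma frac_eqmod1 a b : eqmod1 a b -> frac a = frac b.
Proof.
case=> m h; have -> : a = b + m%:~R by rewrite -h addrC subrK.
by rewrite /frac floorDrz ?intr_int // intrKfloor intrD opprD addrACA subrr addr0.
Qed.

Lemma fwd_dist_eqmod1 x y : eqmod1 (fwd_dist x y) (y - x).
Proof.
rewrite /fwd_dist; case: eqP => [f0|_]; last exact: eqmod1_frac.
by apply: eqmod1_trans (eqmod1_frac _); rewrite f0; exists 1; rewrite subr0.
Qed.

Lemma fwd_dist_gt0 x y : 0 < fwd_dist x y.
Proof.
by rewrite /fwd_dist; case: eqP => // /eqP f0; rewrite lt_def f0 frac_ge0.
Qed.

Lemma fwd_dist_le1 x y : fwd_dist x y <= 1.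
Proof. by rewrite /fwd_dist; case: eqP => _ //; apply/ltW/frac_lt1. Qed.

Lemma fwd_distE x y t : 0 < t <= 1 -> eqmod1 t (y - x) -> fwd_dist x y = t.
Proof.
move=> /andP[t_gt0 t_le1] /frac_eqmod1 ftE; rewrite /fwd_dist -ftE.
have [->|t_neq1] := eqVneq t 1; first by rewrite /frac floor1 subrr eqxx.
by rewrite frac_id ?(ltW t_gt0) ?lt_neqAle ?t_neq1 // gt_eqF.
Qed.

Lemma eq_fwd_dist x y x' y' :
  eqmod1 (y - x) (y' - x') -> fwd_dist x y = fwd_dist x' y'.
Proof. by rewrite /fwd_dist => /frac_eqmod1 ->. Qed.

Lemma fwd_dist_inj x x' y : fwd_dist x y = fwd_dist x' y -> eqmod1 x x'.
Proof.
move=> e; have [m h] : eqmod1 (y - x) (y - x').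
  apply: eqmod1_trans (eqmod1_sym (fwd_dist_eqmod1 x y)) _.
  by rewrite e; apply: fwd_dist_eqmod1.
by exists (- m); rewrite intrN -h; ring.
Qed.

Lemma fwd_dist_between x w y : fwd_dist w y < fwd_dist x y ->
  fwd_dist x w = fwd_dist x y - fwd_dist w y.
Proof.
move=> lt_wy; apply: fwd_distE.
  by have := fwd_dist_gt0 w y; have := fwd_dist_le1 x y; lra.
apply: eqmod1_trans (eqmod1B (fwd_dist_eqmod1 x y) (fwd_dist_eqmod1 w y)) _.
by exists 0; rewrite mulr0z; ring.
Qed.

Lemma frac_fracD a b : frac (frac a + b) = frac (a + b).
Proof. by apply/frac_eqmod1/eqmod1D/eqmod1_refl/eqmod1_frac. Qed.

Lemma fwd_dist_fracl x y : fwd_dist (frac x) y = fwd_dist x y.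
Proof. by apply: eq_fwd_dist; apply: eqmod1B (eqmod1_refl y) (eqmod1_frac x). Qed.

Lemma fwd_dist_fracr x y : fwd_dist x (frac y) = fwd_dist x y.
Proof. by apply: eq_fwd_dist; apply: eqmod1B (eqmod1_frac y) (eqmod1_refl x). Qed.

Lemma fwd_distDr t x y : fwd_dist (x + t) (y + t) = fwd_dist x y.
Proof. by apply: eq_fwd_dist; rewrite opprD addrACA subrr addr0; apply: eqmod1_refl. Qed.

End CircleDistance.

Section Gaps.
Variables (R : realType) (S : set R).
Implicit Types x y z g : R.

Definition gap_to y g :=
  (exists2 x, S x & g = fwd_dist x y) /\ (forall x, S x -> g <= fwd_dist x y).

Lemma gap_at_uniq x g1 g2 : gap_at S x g1 -> gap_at S x g2 -> g1 = g2.
Proof.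
move=> [[y1 S1 ->] min1] [[y2 S2 ->] min2].
by apply/eqP; rewrite eq_le min1 // min2.
Qed.

Lemma gap_to_uniq y g1 g2 : gap_to y g1 -> gap_to y g2 -> g1 = g2.
Proof.
move=> [[x1 S1 ->] min1] [[x2 S2 ->] min2].
by apply/eqP; rewrite eq_le min1 // min2.
Qed.

Lemma gap_at_eqmod1 x x' g : eqmod1 x x' -> gap_at S x g -> gap_at S x' g.
Proof.
move=> xx' [[y Sy gE] gmin].
have fwdE z : fwd_dist x z = fwd_dist x' z by apply/eq_fwd_dist/eqmod1B/xx'/eqmod1_refl.
by split; [exists y; rewrite -?fwdE|move=> z; rewrite -fwdE; apply: gmin].
Qed.

Lemma gap_to_next x y g : gap_at S x g -> S x -> S y -> g = fwd_dist x y -> gap_to y g.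
Proof.
move=> [_ gmin] Sx Sy gE; split; first by exists x.
move=> w Sw; rewrite leNgt; apply/negP; rewrite gE => /fwd_dist_between xwE.
by have := gmin _ Sw; rewrite xwE gE; have := fwd_dist_gt0 w y; lra.
Qed.

Variable th : R.

Lemma gap_at_shift x y g : gap_at S x g -> S y -> g = fwd_dist x y ->
    S (frac (y - th)) ->
    (forall z, S z -> fwd_dist (x - th) z < g -> S (frac (z + th))) ->
  gap_at S (frac (x - th)) g.
Proof.
move=> [_ gmin] Sy gE Sy' lastS; split.
  by exists (frac (y - th)); rewrite // fwd_dist_fracl fwd_dist_fracr fwd_distDr.
move=> z Sz; rewrite fwd_dist_fracl leNgt; apply/negP => lt_z.
have := gmin _ (lastS z Sz lt_z).
by rewrite fwd_dist_fracr -(fwd_distDr (- th)) addrK leNgt lt_z.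
Qed.

Lemma gap_before_uniq z x1 x2 g1 g2 : S x1 -> S x2 ->
    gap_at S x1 g1 -> fwd_dist (x1 - th) z < g1 ->
    gap_at S x2 g2 -> fwd_dist (x2 - th) z < g2 ->
  g1 = g2.
Proof.
wlog le12 : x1 x2 g1 g2 / fwd_dist (x1 - th) z <= fwd_dist (x2 - th) z.
  move=> hwlog S1 S2 G1 L1 G2 L2.
  have [le12|/ltW le21] := leP (fwd_dist (x1 - th) z) (fwd_dist (x2 - th) z).
    exact: (hwlog x1 x2 g1 g2 le12 S1 S2 G1 L1 G2 L2).
  exact/esym/(hwlog x2 x1 g2 g1 le21 S2 S1 G2 L2 G1 L1).
move=> S1 S2 G1 L1 G2 L2; move: le12; rewrite le_eqVlt => /orP[/eqP e|lt12].
  apply: gap_at_uniq G2; apply: gap_at_eqmod1 G1.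
  by have := eqmod1D (fwd_dist_inj e) (eqmod1_refl th); rewrite !subrK.
have x21E := fwd_dist_between lt12; rewrite fwd_distDr in x21E.
have [_ /(_ _ S1)] := G2; rewrite x21E.
by have := fwd_dist_gt0 (x1 - th) z; lra.
Qed.

End Gaps.

Lemma card_fset_set_range_le (T : finType) (U : choiceType) (f : T -> U) (A : set U) :
  A `<=` range f -> (#|` fset_set A| <= #|T|)%N.
Proof.
move=> Af; have finA := sub_finite_set Af (finite_image f finite_finset).
rewrite (fset_set_sub finA (finite_image f finite_finset)) in Af.
apply: (leq_trans (fsubset_leq_card Af)).
rewrite (fset_set_image f (@finite_finset T setT)).
apply: (leq_trans (leq_imfset_card _ _ _)).
change (#|` fset_set [set: T]| <= #|T|)%N.
have -> : fset_set [set: T] = [fset x in (predT : pred T)]%fset.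
  apply/fsetP => x; rewrite in_fset_set; last exact: finite_finset.
  by apply/idP/imfsetP => _; [exists x|exact: in_setT].
by rewrite card_finset.
Qed.

Section Progressions.
Variables (R : realType) (I : finType) (c : I -> R) (n : I -> nat) (th : R).

Definition progressions : set R :=
  [set x | exists i j, (j < n i)%N /\ x = frac (c i + j%:R * th)].
Local Notation S := progressions.

Definition last_term i := frac (c i + (n i).-1%:R * th).

Lemma progressions_pred x : S x -> S (frac (x - th)) \/ exists i, x = frac (c i).
Proof.
case=> i [[|j] [lt_jn ->]]; first by right; exists i; rewrite mul0r addr0.
left; exists i, j; split; first exact: ltnW.
by rewrite frac_fracD -addn1 natrD mulrDl mul1r addrA addrK.
Qed.

Lemma progressions_succ z : S z -> S (frac (z + th)) \/ exists i, z = last_term i.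
Proof.
case=> i [j [lt_jn ->]]; have [lt_j1n|] := ltnP j.+1 (n i).
  left; exists i, j.+1; split => //.
    by rewrite frac_fracD -addn1 natrD mulrDl mul1r addrA.
by right; exists i; rewrite /last_term (_ : j = (n i).-1) //; lia.
Qed.

(* The three ways a gap length arises from progression i: the gap at its first
   term, the gap ending at its first term, or a gap whose shift by -th passes
   over its last term. *)
Definition gap_kind (p : I * 'I_3) g : Prop :=
  match val p.2 with
  | 0%N => gap_at S (frac (c p.1)) g
  | 1%N => gap_to S (frac (c p.1)) g
  | _ => exists2 x, S x & gap_at S x g /\ fwd_dist (x - th) (last_term p.1) < g
  end.

Lemma gap_kind_uniq p g1 g2 : gap_kind p g1 -> gap_kind p g2 -> g1 = g2.
Proof.
rewrite /gap_kind; case: p => i [[|[|k]] lt_k3] /=.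
- exact: gap_at_uniq.
- exact: gap_to_uniq.
move=> [x1 S1 [G1 L1]] [x2 S2 [G2 L2]]; exact: gap_before_uniq L1 G2 L2.
Qed.

Lemma gap_at_kind i j g : (j < n i)%N ->
  gap_at S (frac (c i + j%:R * th)) g -> exists p, gap_kind p g.
Proof.
elim: j g => [|j IHj] g lt_jn Gx.
  by exists (i, 0 : 'I_3); move: Gx; rewrite mul0r addr0.
set x := frac (c i + j.+1%:R * th) in Gx.
have Sx : S x by exists i, j.+1.
have [[y Sy gE] _] := Gx.
have [Sy'|[i' yE]] := progressions_pred Sy; last first.
  by exists (i', 1 : 'I_3); rewrite /gap_kind /= -yE; apply: gap_to_next Gx Sx Sy gE.
have [[z [Sz [i' zE] lt_z]]|no_last] :=
    pselect (exists z, [/\ S z, exists i', z = last_term i' & fwd_dist (x - th) z < g]).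
  by exists (i', 2 : 'I_3); rewrite /gap_kind /= -zE; exists x.
apply: (IHj _ (ltnW lt_jn)).
have -> : c i + j%:R * th = c i + j.+1%:R * th - th.
  by rewrite -addn1 natrD mulrDl mul1r addrA addrK.
rewrite -frac_fracD.
apply: gap_at_shift Gx Sy gE Sy' _ => z Sz lt_z.
have [//|[i' zE]] := progressions_succ Sz.
by exfalso; apply: no_last; exists z; split => //; exists i'.
Qed.

Lemma card_gap_lengths_progressions : (#|` fset_set (gap_lengths S)| <= #|I| * 3)%N.
Proof.
rewrite -[3%N]card_ord -card_prod.
apply: (card_fset_set_range_le (f := fun p => xget 0 (gap_kind p))).
move=> g [_ [i [j [lt_jn ->]]] Gx].
have [p Kp] := gap_at_kind lt_jn Gx.
by exists p => //; apply: xget_unique => // g' /gap_kind_uniq; apply.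
Qed.

End Progressions.

Lemma rat_common_denominator (I : finType) (q : I -> rat) :
  exists (D : nat) (a : I -> int), (0 < D)%N /\ forall i, D%:R * q i = (a i)%:~R.
Proof.
have den_gt0 i : (0 < `|denq (q i)|)%N by rewrite absz_gt0 denq_neq0.
exists (\prod_i `|denq (q i)|)%N.
exists (fun i => (\prod_(j | j != i) `|denq (q j)|)%N%:Z * numq (q i)).
split=> [|i]; first by rewrite prodn_gt0.
by rewrite (bigD1 i) //= natrM intrM numqE natr_absz gtr0_norm ?denq_gt0 //; ring.
Qed.

Lemma int_sign_scaling (I : finType) (a : I -> int) :
  exists (P : I -> nat) (M : nat),
    forall i, (0 < P i)%N /\ (P i)%:Z * a i = sgz (a i) * M%:Z.
Proof.
pose w j := maxn 1 `|a j|.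
exists (fun i => \prod_(j | j != i) w j)%N, (\prod_j w j)%N => i.
split; first by rewrite prodn_gt0 // => j; rewrite leq_max.
have a_sgzE : a i = sgz (a i) * (w i)%:Z.
  have [->|a_neq0] := eqVneq (a i) 0; first by rewrite sgz0 mul0r.
  by rewrite /w (maxn_idPr _) ?absz_gt0 // -intEsg.
by rewrite [in RHS](bigD1 i) //= PoszM {1}a_sgzE; ring.
Qed.

Lemma rat_affine_scaling (I : finType) (r s : I -> rat) :
  exists (Q : I -> nat) (M : nat) (z : I -> int), forall i,
    [/\ (0 < Q i)%N, (Q i)%:R * r i = (sgz (r i))%:~R * M%:R & (Q i)%:R * s i = (z i)%:~R].
Proof.
have [Dr [a [Dr_gt0 raE]]] := rat_common_denominator r.
have [Ds [b [Ds_gt0 sbE]]] := rat_common_denominator s.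
have [P [M PaE]] := int_sign_scaling a.
exists (fun i => Dr * Ds * P i)%N, (Ds * M)%N, (fun i => (Dr * P i)%N%:Z * b i) => i.
have [P_gt0 PaiE] := PaE i.
have sgz_ar : sgz (a i) = sgz (r i).
  by rewrite -(sgz_int rat) -raE sgzM gtr0_sgz ?mul1r ?ltr0n.
split; first by rewrite !muln_gt0 Dr_gt0 Ds_gt0.
  have := congr1 (fun k : int => k%:~R : rat) PaiE.
  rewrite /= !intrM -raE sgz_ar => PrE.
  transitivity (Ds%:R * ((P i)%:~R * (Dr%:R * r i))); first by rewrite !natrM; ring.
  by rewrite PrE natrM; ring.
by rewrite intrM -sbE !natrM; ring.
Qed.

Lemma Posz_sum (I : Type) (r : seq I) (P : pred I) (F : I -> nat) :
  (\sum_(i <- r | P i) F i)%N%:Z = \sum_(i <- r | P i) (F i)%:Z.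
Proof. by rewrite -natz natr_sum; apply: eq_bigr => i _; rewrite natz. Qed.

Lemma leq_sum_partition (I : eqType) (r : seq I) (B : I -> nat) (j : nat) :
  uniq r -> (j <= \sum_(i <- r) B i)%N ->
  exists2 w : I -> nat, (forall i, w i <= B i)%N & (\sum_(i <- r) w i)%N = j.
Proof.
elim: r j => [|a r IHr] j /=.
  by rewrite big_nil leqn0 => _ /eqP->; exists (fun=> 0%N); rewrite ?big_nil.
move=> /andP[a_notin_r r_uniq]; rewrite big_cons => le_j.
have [|w le_wB sum_w] := IHr (j - minn j (B a))%N r_uniq; first lia.
exists (fun i => if i == a then minn j (B a) else w i).
  by move=> i; case: eqP => [->|_]; [exact: geq_minr|exact: le_wB].
rewrite big_cons eqxx (eq_big_seq w) ?sum_w; first lia.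
by move=> i i_in_r; rewrite ifN //; apply: contraNneq a_notin_r => <-.
Qed.

Lemma sgz_cases (R : realDomainType) (x : R) : sgz x = 0 \/ sgz x = 1 \/ sgz x = -1.
Proof. by case: sgzP => _; [left|right; left|right; right]. Qed.

Section SignedSums.
Variables (I : finType) (e : I -> int) (B : I -> nat).
Hypothesis e_sign : forall i, e i = 0 \/ e i = 1 \/ e i = -1.

Definition neg_mass : nat := \sum_i (e i == -1)%R * B i.
Definition total_mass : nat := \sum_i (e i != 0)%R * B i.

Lemma signed_sum_range (t : int) :
  (exists2 u : I -> nat, (forall i, u i <= B i)%N & t = \sum_i e i * (u i)%:Z) <->
  (exists2 j : nat, (j <= total_mass)%N & t = j%:Z - neg_mass%:Z).
Proof.
(* [flip i u] is [u], [B i - u] or [0] according as [e i] is [1], [-1] or [0]. *)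
pose flip i (u : nat) := absz (e i * u%:Z + ((e i == -1)%R * B i)%N%:Z).
have sum_flip (u w : I -> nat) :
    (forall i, e i * (u i)%:Z = (w i)%:Z - ((e i == -1)%R * B i)%N%:Z) ->
    \sum_i e i * (u i)%:Z = (\sum_i w i)%N%:Z - neg_mass%:Z.
  by move=> uwE; rewrite /neg_mass !Posz_sum -sumrB; apply: eq_bigr => i _; apply: uwE.
split=> [[u le_uB ->]|[j le_j ->]].
  exists (\sum_i flip i (u i))%N.
    by apply: leq_sum => i _; have := e_sign i; have := le_uB i; rewrite /flip; lia.
  by apply: sum_flip => i; have := e_sign i; have := le_uB i; rewrite /flip; lia.
have [w le_w <-] := leq_sum_partition (index_enum_uniq I) le_j.
exists (fun i => flip i (w i)).
  by move=> i; have := e_sign i; have := le_w i; rewrite /flip; lia.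
by apply/esym/sum_flip => i; have := e_sign i; have := le_w i; rewrite /flip; lia.
Qed.

End SignedSums.

Definition box_points (R : realType) (d : nat) (alpha : 'I_d -> R) (N : 'I_d -> nat) :
    set R :=
  [set frac (dotZ (fun i => (m i)%:Z) alpha) | m in [set m | forall i, (m i < N i)%N]].

Section BoxProgressions.
Variables (R : realType) (d : nat) (alpha : 'I_d -> R) (th : R).
Variables (Q : 'I_d -> nat) (eps z : 'I_d -> int) (N : 'I_d -> nat).
Hypotheses (Q_gt0 : forall i, (0 < Q i)%N)
  (eps_sign : forall i, eps i = 0 \/ eps i = 1 \/ eps i = -1)
  (QalphaE : forall i, (Q i)%:R * alpha i = (eps i)%:~R * th + (z i)%:~R).

Lemma dotZ_divmod (u v : 'I_d -> nat) :
  eqmod1 (dotZ (fun i => (Q i * u i + v i)%N%:Z) alpha)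
         (\sum_i (v i)%:R * alpha i + (\sum_i eps i * (u i)%:Z)%:~R * th).
Proof.
exists (\sum_i (u i)%:Z * z i).
have termE i : ((Q i * u i + v i)%N%:Z)%:~R * alpha i =
    (v i)%:R * alpha i + (eps i * (u i)%:Z)%:~R * th + ((u i)%:Z * z i)%:~R.
  transitivity ((u i)%:R * ((Q i)%:R * alpha i) + (v i)%:R * alpha i).
    by rewrite -[_%:~R]/(_%:R) natrD natrM; ring.
  by rewrite QalphaE !intrM; ring.
rewrite /dotZ (eq_bigr _ (fun i _ => termE i)) !big_split /= -mulr_suml -!rmorph_sum /=.
by ring.
Qed.

Definition quot_count i v := ((N i - v + (Q i).-1) %/ Q i)%N.

Lemma quot_countP i v u : (u < quot_count i v)%N = (Q i * u + v < N i)%N.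
Proof.
have Qi_gt0 := Q_gt0 i.
by rewrite /quot_count ltnNge -ltnS ltn_divLR // -leqNgt; apply/idP/idP; nia.
Qed.

Definition residues := {dffun forall i : 'I_d, 'I_(Q i)}.

Definition admissible (v : residues) := [forall i, (v i < N i)%N].

Definition quot_bound (v : residues) i := (quot_count i (v i)).-1.

Definition offset (v : residues) : R :=
  \sum_i (v i)%:R * alpha i - (neg_mass eps (quot_bound v))%:R * th.

Definition prog_length (v : residues) : nat :=
  if admissible v then (total_mass eps (quot_bound v)).+1 else 0.

Lemma dotZ_offset (v : residues) (u : 'I_d -> nat) (j : nat) :
  \sum_i eps i * (u i)%:Z = j%:Z - (neg_mass eps (quot_bound v))%:Z ->
  frac (dotZ (fun i => (Q i * u i + v i)%N%:Z) alpha) = frac (offset v + j%:R * th).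
Proof.
move=> sumE; apply/frac_eqmod1/(eqmod1_trans (dotZ_divmod u _)).
by rewrite sumE intrB /offset; exists 0; rewrite mulr0z; ring.
Qed.

Lemma box_points_progressions : box_points alpha N = progressions offset prog_length th.
Proof.
apply/seteqP; split=> [_ [m /= m_lt <-]|_ [v [j [lt_j ->]]]].
  pose v : residues := [ffun i => Ordinal (ltn_pmod (m i) (Q_gt0 i))].
  have vE i : (v i : nat) = (m i %% Q i)%N by rewrite ffunE.
  pose u i := (m i %/ Q i)%N.
  have mE i : m i = (Q i * u i + v i)%N by rewrite vE mulnC -divn_eq.
  have v_adm : admissible v.
    by apply/forallP => i; rewrite vE (leq_ltn_trans (leq_mod _ _)).
  have u_le i : (u i <= quot_bound v i)%N.
    by have := quot_countP i (v i) (u i); rewrite -mE m_lt /quot_bound; lia.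
  have [k le_k uE] :=
    (signed_sum_range (quot_bound v) eps_sign _).1 (ex_intro2 _ _ u u_le erefl).
  exists v, k; split; first by rewrite /prog_length v_adm ltnS.
  by rewrite (_ : (fun i => _) = fun i => (Q i * u i + v i)%N%:Z) ?(dotZ_offset uE) //;
    apply: funext => i; rewrite mE.
have v_adm : admissible v by move: lt_j; rewrite /prog_length; case: ifP.
move: lt_j; rewrite /prog_length v_adm ltnS => le_j.
have [u u_le /esym uE] :=
  (signed_sum_range (quot_bound v) eps_sign _).2 (ex_intro2 _ _ j le_j erefl).
exists (fun i => Q i * u i + v i)%N; last exact: dotZ_offset.
move=> i; rewrite -quot_countP (leq_ltn_trans (u_le i)) // ltn_predL.
by rewrite quot_countP muln0 add0n; apply: (forallP v_adm).
Qed.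

End BoxProgressions.

Section ScaledBox.
Variables (R : realType) (d : nat) (T : 'I_d -> R).
Hypothesis T_ge1 : forall i, 1 <= T i.

Lemma scaled_unit_box_int (m : 'I_d -> int) :
  scaleD (@unit_box R d) T (fun i => (m i)%:~R) <-> forall i, 0 <= m i < Num.ceil (T i).
Proof.
have T_gt0 i : 0 < T i by apply: lt_le_trans (T_ge1 i).
split=> [[x x_in mE] i|m_in].
  have /andP[x_ge0 x_lt1] := x_in i.
  rewrite -(ler0z R) ceil_gt_int -(congr1 (fun f => f i) mE).
  by rewrite mulr_ge0 ?(ltW (T_gt0 i)) //=; have := T_gt0 i; nra.
exists (fun i => (m i)%:~R / T i) => [i|].
  have /andP[m_ge0 m_lt] := m_in i; rewrite ceil_gt_int in m_lt.
  by rewrite divr_ge0 ?ler0z ?(ltW (T_gt0 i)) //= ltr_pdivrMr // mul1r.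
by apply: funext => i /=; rewrite mulfVK // gt_eqF.
Qed.

Lemma Sset_scaled_unit_box (alpha : 'I_d -> R) :
  Sset alpha (scaleD (@unit_box R d) T) = box_points alpha (fun i => `|Num.ceil (T i)|%N).
Proof.
have ceil_gt0 i : 0 < Num.ceil (T i) by rewrite ceil_gt0 (lt_le_trans _ (T_ge1 i)).
apply/seteqP; split=> [_ [m /scaled_unit_box_int m_in <-]|_ [m m_lt <-]].
  exists (fun i => `|m i|%N) => [i|]; first by have := m_in i; have := ceil_gt0 i; lia.
  by congr (frac (dotZ _ _)); apply: funext => i; have := m_in i; lia.
exists (fun i => (m i)%:Z) => //; apply/scaled_unit_box_int => i.
by have := m_lt i; have := ceil_gt0 i; lia.
Qed.

End ScaledBox.

Lemma ratr_affine_scaling (R : realType) (I : finType) (r s : I -> rat) (beta : R)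
    (alpha : I -> R) :
  (forall i, alpha i = ratr (r i) * beta + ratr (s i)) ->
  exists (Q : I -> nat) (M : nat) (z : I -> int), (forall i, 0 < Q i)%N /\
    forall i, (Q i)%:R * alpha i = (sgz (r i))%:~R * (M%:R * beta) + (z i)%:~R.
Proof.
move=> alphaE; have [Q [M [z QE]]] := rat_affine_scaling r s.
exists Q, M, z; split=> [i|i]; first by case: (QE i).
have [_ /(congr1 (@ratr R)) QrE /(congr1 (@ratr R)) QsE] := QE i.
move: QrE QsE; rewrite !rmorphM /= !ratr_nat !ratr_int => QrE QsE.
by rewrite alphaE mulrDr mulrA QrE QsE mulrA.
Qed.

Unset Implicit Arguments.

Theorem theorem1p4 (R : realType) (d : nat) (r s : 'I_d -> rat) (beta : R)
    (alpha : 'I_d -> R)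
    (Halpha : forall i, alpha i = ratr (r i) * beta + ratr (s i)) :
  exists B : nat, forall T : 'I_d -> R, (forall i, 1 <= T i) ->
    (Gnum alpha (scaleD (@unit_box R d) T) <= B)%N.
Proof.
have [Q [M [z [Q_gt0 QalphaE]]]] := ratr_affine_scaling Halpha.
have eps_sign i := sgz_cases (r i).
exists (#|{: residues Q}| * 3)%N => T T_ge1.
rewrite /Gnum Sset_scaled_unit_box // (box_points_progressions _ Q_gt0 eps_sign QalphaE).
exact: card_gap_lengths_progressions.
Qed.
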